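(* Let $W=L^a(RL)^{k_1}R(RL)^{k_2}R\cdots(RL)^{k_m}RL^b$ be a balanced word, where $a,b,m\ge 0$ are integers with $a+b=m$ and $k_i\ge 0$ for $1\le i\le m$. Then the elevation multiset of $W$ is the multiset union $$E(W)=\{0,-1,\dots,-a\}\cup\{0,1,\dots,b\}\cup\{(i-a)^{\mu_i}\}_{i=0}^m,$$ where the value $i-a$ appears with multiplicity $\mu_i$ in the last part, with $\mu_0=k_1$, $\mu_i=k_i+1+k_{i+1}$ for $1\le i\le m-1$, and $\mu_m=k_m$.
   Context: Words are finite products of the letters $L,R$. A word is balanced if it contains equally many $L$'s and $R$'s. For a balanced word $W=a_1\cdots a_n$ and $0\le k\le n$, $e_k(W)=\sum_{i=1}^k\overline{a_i}$ with $\overline{R}=1$, $\overline{L}=-1$; the elevation multiset $E(W)$ is the multiset $\{e_0(W),\dots,e_n(W)\}$. The notation $x^\mu$ denotes the value $x$ with multiplicity $\mu$, and $\cup$ denotes multiset union (multiplicities add). *)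

From HB Require Import structures.
From mathcomp Require Import all_boot all_order all_algebra.
Set Implicit Arguments. Unset Strict Implicit. Unset Printing Implicit Defensive.
Import GRing.Theory Num.Theory.
Local Open Scope ring_scope.

Inductive letter := L | R.
Definition letter_eqb (x y : letter) : bool :=
  match x, y with L, L | R, R => true | _, _ => false end.
Lemma letter_eqP : Equality.axiom letter_eqb.
Proof. by case; case; constructor. Qed.
HB.instance Definition _ := hasDecEq.Build letter letter_eqP.

Definition word := seq letter.

Definition lbar (x : letter) : int := if x is R then 1 else -1.

Definition balanced (W : word) : bool := count_mem L W == count_mem R W.

Definition elev (W : word) (k : nat) : int := \sum_(x <- take k W) lbar x.

(* The elevation multiset {e_0(W), ..., e_n(W)}, as a list up to permutation. *)
Definition elevations (W : word) : seq int := [seq elev W k | k <- iota 0 (size W).+1].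

Definition wordW (a b m : nat) (k : nat -> nat) : word :=
  nseq a L ++ flatten [seq flatten (nseq (k i) [:: R; L]) ++ [:: R] | i <- iota 1 m]
  ++ nseq b L.

Definition mu (m : nat) (k : nat -> nat) (i : nat) : nat :=
  if i == 0%N then k 1%N
  else if i == m then k m
  else (k i + 1 + k i.+1)%N.

Definition elev_formula (a b m : nat) (k : nat -> nat) : seq int :=
  [seq - (i%:Z) | i <- iota 0 a.+1] ++ [seq i%:Z | i <- iota 0 b.+1]
  ++ flatten [seq nseq (mu m k i) (i%:Z - a%:Z) | i <- iota 0 m.+1].

(* Follow the path of W.  It descends from 0 to -a along L^a; the i-th block
   (RL)^{k_i} R then oscillates k_i times between i-1-a and i-a and ends at
   i-a; finally L^b descends from m-a = b to 0.  The two descents give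
   {0,...,-a} and {0,...,b}, except that the top value b of the second one is
   the end of the last block.  Every block i contributes k_i to mu_{i-1} and
   to mu_i, and the ends of the blocks 1,...,m-1 give the remaining 1 in mu_i. *)

From mathcomp Require Import all_boot all_order all_algebra.
From mathcomp Require Import zify.
Import GRing.Theory.
Local Open Scope ring_scope.

(* [elev_from h w] is h + e_1(w), ..., h + e_n(w); leaving out e_0 makes it
   split along concatenations (see [elev_from_cat]). *)
Fixpoint elev_from (h : int) (w : word) : seq int :=
  if w is x :: s then (h + lbar x) :: elev_from (h + lbar x) s else [::].

Definition drift (w : word) : int := \sum_(x <- w) lbar x.

Lemma drift_cons x w : drift (x :: w) = lbar x + drift w.
Proof. exact: big_cons. Qed.

Lemma drift_cat u v : drift (u ++ v) = drift u + drift v.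
Proof. exact: big_cat. Qed.

Lemma elev_from_cat h u v :
  elev_from h (u ++ v) = elev_from h u ++ elev_from (h + drift u) v.
Proof.
elim: u h => [|x u IH] h /=; first by rewrite /drift big_nil addr0.
by rewrite IH drift_cons addrA.
Qed.

Lemma elev_fromE h w : elev_from h w = [seq h + elev w i | i <- iota 1 (size w)].
Proof.
elim: w h => [|x w IH] h //=; rewrite IH /elev /= take0 big_seq1.
rewrite -[iota 2 _]/(iota (1 + 1) _) iotaDl -map_comp.
by congr (_ :: _); apply: eq_map => i /=; rewrite add0n big_cons addrA.
Qed.

Lemma elevationsE w : elevations w = 0 :: elev_from 0 w.
Proof.
rewrite elev_fromE /elevations /= /elev take0 big_nil.
by congr (_ :: _); apply: eq_map => i; rewrite add0r.
Qed.

Lemma drift_nseqL n : drift (nseq n L) = - n%:Z.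
Proof.
elim: n => [|n IH]; first by rewrite /drift big_nil.
by rewrite /= drift_cons IH /=; lia.
Qed.

Lemma elev_from_nseqL h n :
  h :: elev_from h (nseq n L) = [seq h - i%:Z | i <- iota 0 n.+1].
Proof.
elim: n h => [|n IH] h; first by rewrite /= subr0.
rewrite [LHS]/= IH -[iota 0 n.+2]/(0%N :: iota (1 + 0) n.+1) iotaDl.
by rewrite map_cons -map_comp subr0; congr (_ :: _); apply: eq_map => i /=; lia.
Qed.

Lemma perm_elev_from_nseqL n :
  perm_eq (n%:Z :: elev_from n%:Z (nseq n L)) [seq i%:Z | i <- iota 0 n.+1].
Proof.
elim: n => [|n IH] //; rewrite [elev_from _ _]/=.
have -> : n.+1%:Z - 1 = n%:Z by lia.
by rewrite -[n.+2]addn1 iotaD map_cat -cat1s perm_catC perm_cat2r.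
Qed.

Lemma drift_flatten_nseq n w : drift (flatten (nseq n w)) = drift w *+ n.
Proof.
elim: n => [|n IH] /=; first by rewrite /drift big_nil.
by rewrite drift_cat IH mulrS.
Qed.

Lemma elev_from_flatten_nseq h n w :
  drift w = 0 -> elev_from h (flatten (nseq n w)) = flatten (nseq n (elev_from h w)).
Proof. by move=> w0; elim: n => //= n IH; rewrite elev_from_cat w0 addr0 IH. Qed.

Lemma drift_RL : drift [:: R; L] = 0.
Proof. by rewrite !drift_cons /drift big_nil. Qed.

Definition blocks (k : nat -> nat) (j n : nat) : word :=
  flatten [seq flatten (nseq (k i) [:: R; L]) ++ [:: R] | i <- iota j n].

Lemma blocksS k j n :
  blocks k j n.+1 = flatten (nseq (k j) [:: R; L]) ++ [:: R] ++ blocks k j.+1 n.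
Proof. by rewrite /blocks /= -catA. Qed.

Lemma drift_blocks k j n : drift (blocks k j n) = n%:Z.
Proof.
elim: n j => [|n IH] j; first by rewrite /drift big_nil.
rewrite blocksS !drift_cat IH drift_flatten_nseq drift_RL mul0rn drift_cons.
by rewrite /drift big_nil /=; lia.
Qed.

Lemma elev_from_blocks k (d : int) j n :
  elev_from (j%:Z - d) (blocks k j.+1 n) =
  flatten [seq flatten (nseq (k i) [:: i%:Z - d; i.-1%:Z - d]) ++ [:: i%:Z - d]
          | i <- iota j.+1 n].
Proof.
elim: n j => [|n IH] j //.
rewrite blocksS !elev_from_cat drift_flatten_nseq drift_RL mul0rn addr0.
rewrite elev_from_flatten_nseq ?drift_RL // drift_cons /drift big_nil addr0.
have up : j%:Z - d + lbar R = j.+1%:Z - d by rewrite /=; lia.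
by rewrite up IH /= up -catA; congr (flatten (nseq _ [:: _; _]) ++ _); lia.
Qed.

Lemma count_flatten_nseq (T : Type) (p : pred T) n (s : seq T) :
  count p (flatten (nseq n s)) = (count p s * n)%N.
Proof. by elim: n => [|n IH] /=; rewrite ?muln0 // count_cat IH mulnS. Qed.

Lemma count_flatten_map (S T : Type) (p : pred T) (f : S -> seq T) s :
  count p (flatten (map f s)) = (\sum_(i <- s) count p (f i))%N.
Proof. by rewrite count_flatten -map_comp sumnE big_map. Qed.

Lemma sum_mu_regroup m k (P : nat -> nat) : (0 < m)%N ->
  (\sum_(1 <= i < m.+1) ((P i + P i.-1) * k i + P i) =
   P m + \sum_(0 <= i < m.+1) P i * mu m k i)%N.
Proof.
case: m => // n _.
have mu_inner : (\sum_(0 <= i < n) P i.+1 * mu n.+1 k i.+1 =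
    \sum_(0 <= i < n) P i.+1 * k i.+1 + \sum_(0 <= i < n) P i.+1 * k i.+2
    + \sum_(0 <= i < n) P i.+1)%N.
  rewrite -!big_split; apply: eq_big_nat => i /andP[_ ltin] /=.
  by rewrite /mu /= eqSS ltn_eqF //; lia.
rewrite big_add1 /=; under eq_bigr do rewrite mulnDl.
rewrite !big_split /= [X in (X + _ + _)%N]big_nat_recr //.
rewrite [X in (_ + X + _)%N]big_nat_recl // [X in (_ + _ + X)%N]big_nat_recr //.
rewrite [in RHS]big_nat_recl // [in RHS]big_nat_recr //=.
by rewrite mu_inner /mu /= eqxx; lia.
Qed.

Lemma perm_block_heights {T : eqType} (c : nat -> T) m k : (0 < m)%N ->
  perm_eq (flatten [seq flatten (nseq (k i) [:: c i; c i.-1]) ++ [:: c i] | i <- iota 1 m])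
          (c m :: flatten [seq nseq (mu m k i) (c i) | i <- iota 0 m.+1]).
Proof.
move=> m_gt0; apply/permP => p.
rewrite -cat1s count_cat !count_flatten_map [count _ [:: _]]/= addn0.
under [in RHS]eq_bigr do rewrite count_nseq.
rewrite -(sum_mu_regroup m k (fun i => p (c i)) m_gt0) /index_iota subn1 /=.
by under eq_bigr do rewrite count_cat count_flatten_nseq /= !addn0.
Qed.

Theorem lemma6p5 (a b m : nat) (k : nat -> nat) :
  (1 <= m)%N -> (a + b)%N = m -> balanced (wordW a b m k) ->
  perm_eq (elevations (wordW a b m k)) (elev_formula a b m k).
Proof.
move=> m_gt0 abm _.
have wordE : wordW a b m k = nseq a L ++ blocks k 1 m ++ nseq b L by [].
have start_blocks : 0 + drift (nseq a L) = 0%:Z - a%:Z by rewrite drift_nseqL add0r.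
have start_tail : 0%:Z - a%:Z + drift (blocks k 1 m) = b%:Z.
  by rewrite drift_blocks; lia.
rewrite elevationsE wordE !elev_from_cat start_blocks start_tail elev_from_blocks.
have head_run : [seq - (i%:Z) | i <- iota 0 a.+1] = 0 :: elev_from 0 (nseq a L).
  by rewrite elev_from_nseqL; apply: eq_map => i; rewrite sub0r.
rewrite /elev_formula head_run -cat_cons perm_cat2l.
have top : m%:Z - a%:Z = b%:Z by lia.
have := perm_block_heights (fun i => i%:Z - a%:Z) m k m_gt0; rewrite top => mid_part.
apply: perm_trans (perm_cat mid_part (perm_refl _)) _.
apply: perm_trans _ (perm_cat (perm_elev_from_nseqL b) (perm_refl _)).
by rewrite !cat_cons perm_cons perm_catC.
Qed.
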